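(* Let $\pi$ be a positive continuous probability density on $\mathbb{R}$ and $q:\mathbb{R}^2\to[0,\infty)$ a bounded continuous function with $q(x,\cdot)$ a probability density for each $x$ and, for some $s>0$, $q(x,x+u)=0$ whenever $|u|>s$. Then for every $a>0$, $\|T_{a^c}\|_2\le\beta_a$, where $\beta_a:=\int_{-s}^{s}\sup_{|x|>a}\sqrt{t(x,x+u)\,t(x+u,x)}\,du$.
   Context: $L^2(\pi)$ is the $L^2$ space of the probability measure $\pi(y)dy$, with operator norm $\|\cdot\|_2$. Set $t(x,y):=\min(q(x,y),\pi(y)q(y,x)/\pi(x))$, $(Tf)(x):=\int_{\mathbb{R}}f(y)t(x,y)\,dy$, and $T_{a^c}f:=1_{\mathbb{R}\setminus[-a,a]}\cdot Tf$. *)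

From HB Require Import structures.
From mathcomp Require Import all_boot all_order all_algebra.
From mathcomp Require Import all_classical all_reals all_analysis.
Set Implicit Arguments. Unset Strict Implicit. Unset Printing Implicit Defensive.
Import Order.TTheory GRing.Theory Num.Theory.
Import numFieldNormedType.Exports.
Local Open Scope classical_set_scope.
Local Open Scope ring_scope.

Section Defs.
Variable R : realType.
Notation leb := (@lebesgue_measure R).

Definition tker (pi : R -> R) (q : R -> R -> R) (x y : R) : R :=
  Num.min (q x y) (pi y * q y x / pi x).

Definition Top (pi : R -> R) (q : R -> R -> R) (f : R -> R) (x : R) : R :=
  Rintegral leb setT (fun y => f y * tker pi q x y).

Definition Tac (pi : R -> R) (q : R -> R -> R) (a : R) (f : R -> R) (x : R) : R :=
  if a < `|x| then Top pi q f x else 0.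

Definition L2norm (pi : R -> R) (g : R -> R) : \bar R :=
  ((\int[leb]_x ((g x ^+ 2 * pi x)%:E)) `^ (2^-1))%E.

Definition isL2 (pi : R -> R) (f : R -> R) : Prop :=
  measurable_fun setT f /\ (\int[leb]_x ((f x ^+ 2 * pi x)%:E) < +oo)%E.

Definition opnorm2 (pi : R -> R) (A : (R -> R) -> (R -> R)) : \bar R :=
  ereal_sup [set L2norm pi (A f) | f in [set f | isL2 pi f /\ (L2norm pi f <= 1)%E]].

Definition beta (pi : R -> R) (q : R -> R -> R) (s a : R) : \bar R :=
  (\int[leb]_(u in `[(- s)%R, s]%classic)
     ereal_sup [set (Num.sqrt (tker pi q x (x + u) * tker pi q (x + u) x)%R)%:E
               | x in [set x : R | (a < `|x|)%R]])%E.
End Defs.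

From HB Require Import structures.
From mathcomp Require Import all_boot all_order all_algebra.
From mathcomp Require Import all_classical all_reals all_analysis.
From mathcomp Require Import measurable_realfun.
Import Order.TTheory GRing.Theory Num.Theory.
Import numFieldNormedType.Exports.
Local Open Scope classical_set_scope.
Local Open Scope ring_scope.

(** Detailed balance [t x y * pi x = t y x * pi y] rewrites [t(x, x+u) sqrt(pi x)]
    as [sqrt(t(x, x+u) t(x+u, x)) sqrt(pi(x+u))], which for [|x| > a] is at most
    [w u * sqrt(pi(x+u))], where [w] is the integrand of [beta_a] on [[-s, s]] and
    [0] outside, because [q(x, x+u) = 0] there.  Hence [|T f x| sqrt(pi x)] is
    dominated by [x |-> \int w u g(x+u) du] with [g = |f| sqrt pi], and Young's
    inequality [||w * g||_2 <= ||w||_1 ||g||_2] (Cauchy-Schwarz for the measure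
    [w u du], then Tonelli and translation invariance of Lebesgue measure) yields
    [||T_{a^c} f||_2 <= beta_a ||f||_2]. *)

Section integral_inequalities.
Local Open Scope ereal_scope.
Context d (T : measurableType d) (R : realType) (mu : {measure set T -> \bar R}).

Lemma ge0_le_integral_nonmeasurable (f g : T -> \bar R) :
  (forall x, 0 <= f x) -> (forall x, f x <= g x) ->
  \int[mu]_x f x <= \int[mu]_x g x.
Proof.
move=> f0 fg; have g0 x : 0 <= g x by exact: le_trans (f0 x) (fg x).
rewrite !ge0_integralTE//; apply: ereal_sup_le => _ [h hf <-]; exists h => //= x.
exact: le_trans (hf x) (fg x).
Qed.

Lemma le_abse_Rintegral (D : set T) (f : T -> R) : measurable D ->
  measurable_fun D f -> `|Rintegral mu D f|%:E <= \int[mu]_(x in D) `|f x|%:E.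
Proof.
move=> mD mf; apply: le_trans _ (le_abse_integral mu mD ((measurable_EFinP _ _).2 mf)).
by rewrite /Rintegral; case: (\int[mu]_(x in D) (f x)%:E) => [r| |] //=; rewrite leey.
Qed.

Lemma weighted_cauchy_schwarz (w G : T -> R) :
  measurable_fun setT w -> measurable_fun setT G ->
  (forall x, 0 <= w x)%R -> (forall x, 0 <= G x)%R ->
  (\int[mu]_x (w x * G x)%:E) ^+ 2 <=
  \int[mu]_x (w x)%:E * \int[mu]_x (w x * G x ^+ 2)%:E.
Proof.
move=> mw mG w0 G0.
pose f1 x := Num.sqrt (w x); pose f2 x := (Num.sqrt (w x) * G x)%R.
have mf1 : measurable_fun setT f1.
  exact: measurableT_comp (continuous_measurable_fun (@sqrt_continuous R)) mw.
have mf2 : measurable_fun setT f2 by exact: measurable_funM.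
have half : (2^-1 + 2^-1 = 1 :> R)%R by rewrite [RHS](splitr 1) div1r.
have := hoelder mu mf1 mf2 (ltr0Sn _ 1) (ltr0Sn _ 1) half.
rewrite Lnorm1 !unlock /=.
have f12 x : `|f1 x * f2 x|%R = (w x * G x)%R.
  by rewrite mulrA -expr2 sqr_sqrtr // ger0_norm // mulr_ge0.
have f1p x : (`|f1 x| `^ 2)%R = w x.
  by rewrite ger0_norm ?sqrtr_ge0 // powR_mulrn ?sqrtr_ge0 // sqr_sqrtr.
have f2p x : (`|f2 x| `^ 2)%R = (w x * G x ^+ 2)%R.
  rewrite ger0_norm ?mulr_ge0 ?sqrtr_ge0 // powR_mulrn ?mulr_ge0 ?sqrtr_ge0 //.
  by rewrite exprMn sqr_sqrtr.
under eq_integral do rewrite f12; under [X in X `^ _]eq_integral do rewrite f1p.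
under [X in _ * X `^ _]eq_integral do rewrite f2p.
have wG0 : 0 <= \int[mu]_x (w x * G x)%:E.
  by apply: integral_ge0 => x _; rewrite lee_fin mulr_ge0.
have w_int0 : 0 <= \int[mu]_x (w x)%:E.
  by apply: integral_ge0 => x _; rewrite lee_fin.
have wG2_0 : 0 <= \int[mu]_x (w x * G x ^+ 2)%:E.
  by apply: integral_ge0 => x _; rewrite lee_fin mulr_ge0 ?sqr_ge0.
rewrite !poweR12_sqrt // -sqrteM // => cs.
by rewrite -(lee_sqrt _ (mule_ge0 w_int0 wG2_0)) sqrte_sqr gee0_abs.
Qed.

End integral_inequalities.

Section lebesgue_convolution.
Local Open Scope ereal_scope.
Context {R : realType}.
Notation leb := (@lebesgue_measure R).

Lemma measurable_shift (u : R) :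
  measurable_fun setT ((fun x => x + u)%R : measurableTypeR R -> measurableTypeR R).
Proof.
by apply: continuous_measurable_fun => x; apply: continuousD => //; exact: cvg_cst.
Qed.

Lemma ge0_integral_shift (u : R) (g : R -> \bar R) :
  measurable_fun setT g -> (forall x, 0 <= g x) ->
  \int[leb]_x g (x + u)%R = \int[leb]_x g x.
Proof.
(* The image of Lebesgue measure under a translation agrees with it on
   half-open intervals, hence everywhere. *)
move=> mg g0; have mshift := measurable_shift u.
have := @ge0_integral_pushforward _ _ (measurableTypeR R) (measurableTypeR R) R _
  mshift leb _ _ measurableT mg (fun y _ => g0 y).
rewrite preimage_setT => <-; apply: eq_measure_integral => A mA _; apply/esym.
apply: (@lebesgue_measure_unique R
  (measure_function_pushforward__canonical__measure_function_Measure leb mshift)) => // X.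
move=> /ocitvP [->|[[a b]] /= ab ->]; first by rewrite !measure0.
rewrite /pushforward.
have -> : (fun x => x + u)%R @^-1` `]a, b]%classic = `](a - u)%R, (b - u)%R]%classic.
  by apply/seteqP; split => x /=; rewrite !in_itv /= ltrBlDr lerBrDr.
rewrite !lebesgue_measure_itv /= !lte_fin ltrD2r ab -!EFinD.
by rewrite opprB addrA subrK.
Qed.

Section convolution.
Variables (w P : R -> R).
Hypotheses (mw : measurable_fun setT w) (mP : measurable_fun setT P).
Hypotheses (w0 : forall u, (0 <= w u)%R) (P0 : forall x, (0 <= P x)%R).

Let conv (z : measurableTypeR R * measurableTypeR R) := (w z.2 * P (z.1 + z.2))%:E.

Let mconv : measurable_fun setT conv.
Proof.
apply/measurable_EFinP/measurable_funM; first exact: measurableT_comp mw measurable_snd.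
exact: measurableT_comp mP (measurable_funD measurable_fst measurable_snd).
Qed.

Let conv0 z : 0 <= conv z. Proof. by rewrite lee_fin mulr_ge0. Qed.

Lemma measurable_convolution :
  measurable_fun [set: measurableTypeR R] (fun x => \int[leb]_u (w u * P (x + u))%:E).
Proof. exact: (measurable_fun_fubini_tonelli_F conv mconv conv0). Qed.

Lemma ge0_integral_convolution :
  \int[leb]_x \int[leb]_u (w u * P (x + u))%:E =
  \int[leb]_u (w u)%:E * \int[leb]_x (P x)%:E.
Proof.
have := @fubini_tonelli _ _ _ _ R leb leb conv mconv conv0; rewrite /conv /= => ->.
transitivity (\int[leb]_u ((w u)%:E * \int[leb]_x (P x)%:E)).
  apply: eq_integral => u _; under eq_integral do rewrite EFinM.
  rewrite ge0_integralZl_EFin //; last 2 first.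
  - by move=> x _; rewrite lee_fin.
  - by apply/measurable_EFinP; exact: measurableT_comp mP (measurable_shift u).
  by rewrite (ge0_integral_shift u (fun x => (P x)%:E)) //; exact/measurable_EFinP.
rewrite ge0_integralZr //.
- exact/measurable_EFinP.
- by move=> u _; rewrite lee_fin.
- by apply: integral_ge0 => x _; rewrite lee_fin.
Qed.

End convolution.

Lemma young_convolution_L1_L2 (w G : R -> R) :
  measurable_fun setT w -> measurable_fun setT G ->
  (forall u, 0 <= w u)%R -> (forall x, 0 <= G x)%R ->
  \int[leb]_x (\int[leb]_u (w u * G (x + u))%:E) ^+ 2 <=
  (\int[leb]_u (w u)%:E) ^+ 2 * \int[leb]_x (G x ^+ 2)%:E.
Proof.
move=> mw mG w0 G0.
have mG2 : measurable_fun setT (fun x => G x ^+ 2)%R by exact: measurable_funX.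
have G2_0 x : (0 <= G x ^+ 2)%R by exact: sqr_ge0.
have cs x : (\int[leb]_u (w u * G (x + u))%:E) ^+ 2 <=
    \int[leb]_u (w u)%:E * \int[leb]_u (w u * G (x + u) ^+ 2)%:E.
  apply: weighted_cauchy_schwarz => //.
  by apply: measurableT_comp mG _; exact: measurable_funD.
apply: le_trans.
  by apply: ge0_le_integral_nonmeasurable => x; [exact: sqre_ge0 | exact: cs].
rewrite ge0_integralZl //.
- by move: (ge0_integral_convolution _ _ mw mG2 w0 G2_0) => /= ->; rewrite muleA.
- exact: (measurable_convolution _ _ mw mG2).
- by move=> x _; apply: integral_ge0 => u _; rewrite lee_fin mulr_ge0.
- by apply: integral_ge0 => u _; rewrite lee_fin.
Qed.

End lebesgue_convolution.

Lemma measurable_ereal_sup_continuous {R : realType} (I : Type) (A : set I)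
    (f : I -> R -> R) :
  (forall i, continuous (f i)) ->
  measurable_fun setT (fun u => ereal_sup [set (f i u)%:E | i in A]).
Proof.
move=> cf; apply: lower_semicontinuous_measurable => u c /ereal_sup_gt [_ [i Ai <-]].
rewrite lte_fin => cfi; exists [set v | c < f i v]; first exact: cvgr_gt (cf i u) _ cfi.
move=> v /= cfv; apply: (@lt_le_trans _ _ (f i v)%:E); first by rewrite lte_fin.
by apply: ereal_sup_ubound; exists i.
Qed.

Lemma continuous_comp2 {R : realType} (Q : R -> R -> R) (F G : R -> R) :
  continuous (fun p : R * R => Q p.1 p.2) -> continuous F -> continuous G ->
  continuous (fun u => Q (F u) (G u)).
Proof.
move=> cQ cF cG u.
apply: (@continuous_comp _ _ _ (fun u => (F u, G u)) (fun p : R * R => Q p.1 p.2)).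
  exact: cvg_pair (cF u) (cG u).
exact: cQ.
Qed.

Section metropolis_kernel.
Context {R : realType}.
Variables (pi : R -> R) (q : R -> R -> R).
Hypotheses (pi_cont : continuous pi) (pi_pos : forall x, 0 < pi x).
Hypotheses (q_cont : continuous (fun p : R * R => q p.1 p.2))
  (q_ge0 : forall x y, 0 <= q x y).
Local Notation t := (tker pi q).

Lemma tker_ge0 x y : 0 <= t x y.
Proof. by rewrite /tker le_min q_ge0 divr_ge0 ?mulr_ge0 ?q_ge0 ?ltW. Qed.

Lemma tker_le x y : t x y <= q x y.
Proof. by rewrite /tker ge_min lexx. Qed.

Lemma tker_balance x y : t x y * pi x = t y x * pi y.
Proof.
rewrite /tker !minr_pMl ?ltW // !divfK ?gt_eqF // minC.
by rewrite [q x y * _]mulrC [q y x * _]mulrC.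
Qed.

Lemma continuous_tker (F G : R -> R) : continuous F -> continuous G ->
  continuous (fun u => t (F u) (G u)).
Proof.
move=> cF cG u; apply: (@continuous_min _ _ (fun u => q (F u) (G u))).
  exact: continuous_comp2.
apply: continuousM; first apply: continuousM.
- exact: continuous_comp (cG u) (pi_cont _).
- exact: continuous_comp2.
- apply: continuousV; first by rewrite gt_eqF.
  exact: continuous_comp (cF u) (pi_cont _).
Qed.

Definition tker_gmean x u := Num.sqrt (t x (x + u) * t (x + u) x).

Lemma continuous_tker_gmean x : continuous (tker_gmean x).
Proof.
have cx : continuous (fun _ : R => x) by move=> ?; exact: cvg_cst.
have cxu : continuous (fun u : R => x + u).
  by move=> u; apply: continuousD => //; exact: cvg_cst.
move=> u; apply: continuous_comp; last exact: sqrt_continuous.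
by apply: continuousM; exact: continuous_tker.
Qed.

Lemma tker_sqrt_pi x u :
  t x (x + u) * Num.sqrt (pi x) = tker_gmean x u * Num.sqrt (pi (x + u)).
Proof.
rewrite /tker_gmean -sqrtrM ?mulr_ge0 ?tker_ge0 // -mulrA -tker_balance mulrA -expr2.
by rewrite sqrtrM ?sqr_ge0 // sqrtr_sqr ger0_norm ?tker_ge0.
Qed.

End metropolis_kernel.

Section beta_bound.
Context {R : realType}.
Variables (pi : R -> R) (q : R -> R -> R) (s a : R).
Hypotheses (pi_cont : continuous pi) (pi_pos : forall x, 0 < pi x).
Hypotheses (q_cont : continuous (fun p : R * R => q p.1 p.2))
  (q_ge0 : forall x y, 0 <= q x y).
Hypothesis q_bdd : exists M, forall x y, q x y <= M.
Hypothesis q_supp : forall x u, s < `|u| -> q x (x + u) = 0.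
Local Notation t := (tker pi q).
Local Notation leb := (@lebesgue_measure R).

Definition beta_integrand u : \bar R :=
  ereal_sup [set (tker_gmean pi q x u)%:E | x in [set x | a < `|x|]].

Lemma tker_gmean_le_beta_integrand x u : a < `|x| ->
  ((tker_gmean pi q x u)%:E <= beta_integrand u)%E.
Proof. by move=> ax; apply: ereal_sup_ubound; exists x. Qed.

Lemma beta_integrand_ge0 u : (0 <= beta_integrand u)%E.
Proof.
have ax : a < `|(`|a| + 1)|.
  by rewrite ger0_norm ?addr_ge0 // (le_lt_trans (ler_norm a)) // ltrDl.
by rewrite (le_trans _ (tker_gmean_le_beta_integrand _ u ax)) // lee_fin sqrtr_ge0.
Qed.

Lemma beta_integrand_fin u : beta_integrand u \is a fin_num.
Proof.
have [M qM] := q_bdd; rewrite ge0_fin_numE ?beta_integrand_ge0 //.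
apply: le_lt_trans _ (ltry M); apply: ge_ereal_sup => _ [x _ <-]; rewrite lee_fin.
have tM y z : t y z <= M by exact: le_trans (tker_le _ _ _ _) (qM _ _).
have M0 : 0 <= M by exact: le_trans (q_ge0 0 0) (qM 0 0).
rewrite -[leRHS](ger0_norm M0) -sqrtr_sqr ler_wsqrtr // expr2.
by apply: ler_pM; rewrite ?tker_ge0.
Qed.

(* [fine] loses nothing: [beta_integrand] is finite because [q] is bounded. *)
Definition beta_weight u : R := fine (beta_integrand u) * \1_(`[(- s)%R, s]%classic) u.

Lemma beta_weight_ge0 u : 0 <= beta_weight u.
Proof. by rewrite /beta_weight mulr_ge0 // fine_ge0 // beta_integrand_ge0. Qed.

Lemma measurable_beta_weight : measurable_fun setT beta_weight.
Proof.
apply: measurable_funM; last exact: measurable_indic.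
apply: measurableT_comp (fine_measurable measurableT) _.
by apply: measurable_ereal_sup_continuous => x; exact: continuous_tker_gmean.
Qed.

Lemma beta_integral_weight : beta pi q s a = (\int[leb]_u (beta_weight u)%:E)%E.
Proof.
rewrite /beta integral_mkcond; apply: eq_integral => u _.
rewrite /patch /beta_weight indicE; case: ifPn => _; last by rewrite mulr0.
by rewrite mulr1 fineK ?beta_integrand_fin.
Qed.

Lemma tker_sqrt_pi_le x u : a < `|x| ->
  t x (x + u) * Num.sqrt (pi x) <= beta_weight u * Num.sqrt (pi (x + u)).
Proof.
move=> ax; have [us|us] := leP `|u| s; last first.
  have -> : t x (x + u) = 0.
    by apply/eqP; rewrite eq_le tker_ge0 // andbT -(q_supp x _ us) tker_le.
  by rewrite mul0r mulr_ge0 ?beta_weight_ge0 ?sqrtr_ge0.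
have uD : u \in `[(- s)%R, s]%classic by rewrite inE /= in_itv /= -ler_norml.
rewrite tker_sqrt_pi // /beta_weight indicE uD mulr1 ler_wpM2r ?sqrtr_ge0 //.
by rewrite -lee_fin fineK ?beta_integrand_fin ?tker_gmean_le_beta_integrand.
Qed.

Lemma Top_sqrt_pi_le (f : R -> R) x : measurable_fun setT f -> a < `|x| ->
  ((`|Top pi q f x| * Num.sqrt (pi x))%:E <=
   \int[leb]_u (beta_weight u * (`|f (x + u)| * Num.sqrt (pi (x + u))))%:E)%E.
Proof.
move=> mf ax; pose g y := `|f y * t x y|.
have mft : measurable_fun setT (fun y => f y * t x y).
  apply: measurable_funM mf (continuous_measurable_fun _).
  by apply: continuous_tker => // y; [exact: cvg_cst | exact: cvg_id].
have mg : measurable_fun setT g.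
  by apply: measurableT_comp mft; exact: normr_measurable.
have shift : (\int[leb]_y (g y)%:E = \int[leb]_u (g (x + u))%:E)%E.
  under [RHS]eq_integral do rewrite addrC.
  rewrite (ge0_integral_shift x (fun y => (g y)%:E)) //.
    exact: (measurable_EFinP _ g).2 mg.
  by move=> y; rewrite lee_fin normr_ge0.
rewrite EFinM.
apply: le_trans (_ : _ <= \int[leb]_u (g (x + u))%:E * (Num.sqrt (pi x))%:E)%E _.
  apply: lee_wpmul2r; first by rewrite lee_fin sqrtr_ge0.
  by rewrite -shift; exact: le_abse_Rintegral.
rewrite -ge0_integralZr //; last 2 first.
- apply/measurable_EFinP; apply: measurableT_comp mg _.
  exact: measurable_funD.
- by move=> u _; rewrite lee_fin normr_ge0.
apply: ge0_le_integral_nonmeasurable => u.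
  by rewrite -EFinM lee_fin mulr_ge0 ?normr_ge0 ?sqrtr_ge0.
rewrite -EFinM lee_fin /g normrM (ger0_norm (tker_ge0 _ _ pi_pos q_ge0 _ _)).
rewrite -mulrA [leRHS]mulrCA; apply: ler_wpM2l => //.
exact: tker_sqrt_pi_le.
Qed.

Lemma Tac_sqr_pi_le (f : R -> R) x : measurable_fun setT f ->
  ((Tac pi q a f x ^+ 2 * pi x)%:E <=
   (\int[leb]_u (beta_weight u * (`|f (x + u)| * Num.sqrt (pi (x + u))))%:E) ^+ 2)%E.
Proof.
move=> mf; rewrite /Tac; case: ifPn => ax; last by rewrite expr2 !mul0r sqre_ge0.
have -> : Top pi q f x ^+ 2 * pi x = (`|Top pi q f x| * Num.sqrt (pi x)) ^+ 2.
  by rewrite exprMn real_normK ?num_real // sqr_sqrtr // ltW.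
rewrite EFin_expe lee_sqr ?Top_sqrt_pi_le // ?lee_fin ?mulr_ge0 ?sqrtr_ge0 //.
apply: integral_ge0 => u _.
by rewrite lee_fin mulr_ge0 ?beta_weight_ge0 ?mulr_ge0 ?sqrtr_ge0.
Qed.

Lemma Tac_sqr_integral_le (f : R -> R) : measurable_fun setT f ->
  (\int[leb]_x (Tac pi q a f x ^+ 2 * pi x)%:E <=
   (\int[leb]_u (beta_weight u)%:E) ^+ 2 * \int[leb]_x (f x ^+ 2 * pi x)%:E)%E.
Proof.
move=> mf; pose G y := `|f y| * Num.sqrt (pi y).
have mG : measurable_fun setT G.
  apply: measurable_funM; first by apply: measurableT_comp mf; exact: normr_measurable.
  exact: measurableT_comp (continuous_measurable_fun (@sqrt_continuous R))
    (continuous_measurable_fun pi_cont).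
have G2E : (\int[leb]_y (G y ^+ 2)%:E = \int[leb]_y (f y ^+ 2 * pi y)%:E)%E.
  apply: eq_integral => y _.
  by rewrite exprMn real_normK ?num_real // sqr_sqrtr // ltW.
rewrite -G2E; apply: le_trans.
  apply: ge0_le_integral_nonmeasurable => x; last exact: Tac_sqr_pi_le.
  by rewrite lee_fin mulr_ge0 ?sqr_ge0 ?ltW.
apply: young_convolution_L1_L2 => // [|u|y]; first exact: measurable_beta_weight.
- exact: beta_weight_ge0.
- by rewrite mulr_ge0 ?sqrtr_ge0.
Qed.

End beta_bound.

Lemma L2normE {R : realType} (pi g : R -> R) : (forall x, 0 <= pi x) ->
  L2norm pi g = sqrte (\int[@lebesgue_measure R]_x (g x ^+ 2 * pi x)%:E)%E.
Proof.
move=> pi0; rewrite /L2norm poweR12_sqrt //.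
by apply: integral_ge0 => x _; rewrite lee_fin mulr_ge0 ?sqr_ge0.
Qed.

Theorem proposition3p3 (R : realType) (pi : R -> R) (q : R -> R -> R) (s : R)
  (pi_cont : continuous pi)
  (pi_pos : forall x, 0 < pi x)
  (pi_dens : (\int[@lebesgue_measure R]_x (pi x)%:E = 1)%E)
  (q_cont : continuous (fun p : R * R => q p.1 p.2))
  (q_ge0 : forall x y, 0 <= q x y)
  (q_bdd : exists M : R, forall x y, q x y <= M)
  (q_dens : forall x, (\int[@lebesgue_measure R]_y (q x y)%:E = 1)%E)
  (s_gt0 : 0 < s)
  (q_supp : forall x u, s < `|u| -> q x (x + u) = 0) :
  forall a : R, 0 < a ->
    (opnorm2 pi (Tac pi q a) <= beta pi q s a)%E.
Proof.
move=> a _; have pi_ge0 x : 0 <= pi x by exact: ltW.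
rewrite (beta_integral_weight _ _ _ _ pi_pos q_ge0 q_bdd).
set B := (\int[lebesgue_measure]_u (beta_weight pi q s a u)%:E)%E.
have B0 : (0 <= B)%E by apply: integral_ge0 => u _; rewrite lee_fin beta_weight_ge0.
apply: ge_ereal_sup => _ [f [[mf _] f_le1] <-].
have f_le1' : (\int[lebesgue_measure]_y (f y ^+ 2 * pi y)%:E <= 1)%E.
  have sqrte1 : (sqrte 1 = 1 :> \bar R)%E by rewrite /sqrte /= sqrtr1.
  by rewrite -(lee_sqrt _ lee01) sqrte1 -L2normE.
rewrite L2normE // -(gee0_abs B0) -sqrte_sqr lee_sqrt ?sqre_ge0 //.
apply: le_trans.
  exact: (Tac_sqr_integral_le _ _ _ _ pi_cont pi_pos q_cont q_ge0 q_bdd q_supp _ mf).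
by rewrite -[leRHS]mule1 lee_wpmul2l ?sqre_ge0.
Qed.
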